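(* Let $G$ be a finite simple connected graph with at least one edge and $s\ge 0$. The vanishing ideal of the $s$-order principal component of $G$ is the edge ideal of the graph $PC_s(G)$ whose vertex set is $\{x^{(i)} : x\in V(G),\ 0\le i\le s\}$ and whose edge set is $\{\{x^{(i)},y^{(j)}\} : \{x,y\}\in E(G),\ 0\le i,j\le s\}$.
   Context: $R=k[x_1,\dots,x_n]$ over an algebraically closed field $k$, vertices of $G$ identified with variables; $\mathcal{J}_s(R)=k[x_i^{(l)} : 1\le i\le n,\ 0\le l\le s]$. The edge ideal of a graph $H$ on variables is $\langle uv : \{u,v\}\in E(H)\rangle$. The $s$-order principal component of $G$: with $X=\mathcal{V}(I(G))$, jet scheme $\mathcal{J}_s(X)=\mathcal{V}(\mathcal{J}_s(I(G)))\subseteq\mathbb{A}^{n(s+1)}$ (where $\mathcal{J}_s(I)$ is generated by the coefficients of $t^0,\dots,t^s$ of the generators of $I$ after substituting $x_i\mapsto\sum_{l=0}^s x_i^{(l)}t^l$ modulo $t^{s+1}$), and projection $\pi_s$ to the order-$0$ coordinates, it is the Zariski closure of $\pi_s^{-1}(X_{smooth})$, $X_{smooth}$ being the smooth locus of $X$. *)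

From HB Require Import structures.
From mathcomp Require Import all_boot all_order all_algebra.
From mathcomp Require Import mpoly.
Set Implicit Arguments. Unset Strict Implicit. Unset Printing Implicit Defensive.
Import Order.TTheory GRing.Theory.
Local Open Scope ring_scope.

Section AffineGeometry.
Variables (k : closedFieldType) (m : nat).

Definition point := 'I_m -> k.
Definition aset := point -> Prop.

Definition zeros (S : {mpoly k[m]} -> Prop) : aset :=
  fun a => forall f, S f -> f.@[a] = 0.

Definition vanishing (X : aset) : {mpoly k[m]} -> Prop :=
  fun f => forall a, X a -> f.@[a] = 0.

Definition zariski_closure (X : aset) : aset := zeros (vanishing X).

Definition zclosed (Z : aset) : Prop :=
  exists S : {mpoly k[m]} -> Prop, forall a, Z a <-> zeros S a.

Definition subs (A B : aset) := forall a, A a -> B a.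
Definition psubs (A B : aset) := subs A B /\ exists a, B a /\ ~ A a.

Definition irreducible_closed (Z : aset) : Prop :=
  zclosed Z /\ (exists a, Z a) /\
  forall Z1 Z2, zclosed Z1 -> zclosed Z2 -> (forall a, Z a <-> Z1 a \/ Z2 a) ->
    subs Z Z1 \/ subs Z Z2.

Definition chain_at (X : aset) (p : point) (d : nat) (Z : nat -> aset) : Prop :=
  (forall i, (i <= d)%N -> irreducible_closed (Z i) /\ subs (Z i) X) /\
  (forall i, (i < d)%N -> psubs (Z i) (Z i.+1)) /\ Z d p.

(* local dimension of X at p (max dimension of the irreducible components
   through p) *)
Definition local_dim (X : aset) (p : point) (d : nat) : Prop :=
  (exists Z, chain_at X p d Z) /\
  (forall d' Z, chain_at X p d' Z -> (d' <= d)%N).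

Definition tangent_vec (X : aset) (p : point) (v : 'rV[k]_m) : Prop :=
  forall f, vanishing X f -> \sum_(i < m) (mderiv i f).@[p] * v 0 i = 0.

Definition tangent_dim (X : aset) (p : point) (d : nat) : Prop :=
  (exists B : 'M[k]_(d, m), row_free B /\ forall r, tangent_vec X p (row r B)) /\
  (forall B : 'M[k]_(d.+1, m), (forall r, tangent_vec X p (row r B)) -> ~~ row_free B).

Definition smooth_locus (X : aset) : aset :=
  fun p => X p /\ exists d, local_dim X p d /\ tangent_dim X p d.

Definition gen_ideal (S : {mpoly k[m]} -> Prop) (f : {mpoly k[m]}) : Prop :=
  exists r : seq ({mpoly k[m]} * {mpoly k[m]}),
    (forall q, q \in r -> S q.2) /\ f = \sum_(q <- r) q.1 * q.2.

End AffineGeometry.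

Definition simple_graph n (G : rel 'I_n) := ssrbool.symmetric G /\ irreflexive G.
Definition connected_graph n (G : rel 'I_n) := forall x y, connect G x y.

Section Jets.
Variables (k : closedFieldType) (n s : nat) (G : rel 'I_n).

(* jet variable x_i^(l), i < n, l <= s, in J_s(R) = k[x_i^(l)] *)
Definition jv (i : 'I_n) (l : 'I_s.+1) : 'I_(n * s.+1) := mxvec_index i l.

Definition edge_gens : {mpoly k[n]} -> Prop :=
  fun f => exists x y, G x y /\ f = 'X_x * 'X_y.

Definition XG : aset k n := zeros (gen_ideal edge_gens).

Definition xt (i : 'I_n) : {poly {mpoly k[n * s.+1]}} :=
  \poly_(l < s.+1) 'X_(jv i (inord l)).

(* generators of J_s(I(G)): coefficients of t^0..t^s of x(t) y(t) mod t^(s+1),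
   for the generators xy of I(G) *)
Definition jet_gens : {mpoly k[n * s.+1]} -> Prop :=
  fun f => exists x y (p : 'I_s.+1), G x y /\ f = (xt x * xt y)`_p.

Definition jet_scheme : aset k (n * s.+1) := zeros (gen_ideal jet_gens).

Definition pi_s (a : point k (n * s.+1)) : point k n := fun i => a (jv i ord0).

Definition principal_component : aset k (n * s.+1) :=
  zariski_closure (fun a => jet_scheme a /\ smooth_locus XG (pi_s a)).

Definition PC_edge_gens : {mpoly k[n * s.+1]} -> Prop :=
  fun f => exists x y (i j : 'I_s.+1), G x y /\ f = 'X_(jv x i) * 'X_(jv y j).

End Jets.

From HB Require Import structures.
From mathcomp Require Import all_boot all_order all_algebra.
From mathcomp Require Import mpoly.
From Stdlib Require Import Classical.
Set Implicit Arguments. Unset Strict Implicit. Unset Printing Implicit Defensive.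
Import Order.TTheory GRing.Theory.
Local Open Scope ring_scope.

(* [X = V(I(G))] is the union of the coordinate subspaces [W S] of the
   independent sets [S] of [G], and chains of irreducible closed subsets of [W S]
   have length at most [#|S|] (the number of independent functions of degree at
   most [L] in each variable grows by a factor [L] at each step of a chain).
   Comparing this with the tangent space shows that at a smooth point [p] the
   vertices with no neighbour in [supp p] form an independent set, and that points
   whose support is a maximal independent set are smooth.
   Over a smooth point the jet equations force every jet coordinate of a vertex
   adjacent to [supp p] to vanish, so each [x^(i) y^(j)] with [xy] an edge vanishes
   on the principal component. Conversely, a monomial containing no such edge is
   supported on the jet variables of a maximal independent set [S]; the points
   supported there with non-zero order-0 coordinates lie over smooth points, and a
   polynomial vanishing on this dense open part of a coordinate subspace has zero
   coefficients on the monomials supported in it. *)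

Section GeneratedIdeal.
Variables (k : closedFieldType) (m : nat).
Implicit Types (S : {mpoly k[m]} -> Prop) (f g : {mpoly k[m]}).

Lemma gen_ideal_gen S g : S g -> gen_ideal S g.
Proof.
by move=> Sg; exists [:: (1, g)]; split=> [q|]; rewrite ?inE ?big_seq1 ?mul1r // => /eqP->.
Qed.

Lemma gen_ideal_mull S f g : gen_ideal S g -> gen_ideal S (f * g).
Proof.
move=> [r [Sr ->]]; exists [seq (f * q.1, q.2) | q <- r]; split.
  by move=> _ /mapP[q /Sr ? ->].
by rewrite big_map mulr_sumr; apply: eq_bigr => q _; rewrite mulrA.
Qed.

Lemma gen_ideal_sum S (I : eqType) (r : seq I) (F : I -> {mpoly k[m]}) :
  (forall i, i \in r -> gen_ideal S (F i)) -> gen_ideal S (\sum_(i <- r) F i).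
Proof.
elim: r => [|i r IHr] SF; first by exists [::]; rewrite !big_nil.
rewrite big_cons.
have [r1 [S1 ->]] := SF i (mem_head i r).
have [r2 [S2 ->]] := IHr (fun j jr => SF j (mem_behead (s := i :: r) jr)).
exists (r1 ++ r2); split; last by rewrite big_cat.
by move=> q; rewrite mem_cat => /orP[/S1|/S2].
Qed.

Lemma zeros_gen_idealP S (a : point k m) :
  zeros (gen_ideal S) a <-> forall g, S g -> g.@[a] = 0.
Proof.
split=> [za g Sg|Sa f [r [Sr ->]]]; first exact/za/gen_ideal_gen.
rewrite rmorph_sum; apply: big1_seq => q /andP[_ /Sr Sq] /=.
by rewrite mevalM (Sa q.2) // mulr0.
Qed.

Lemma gen_ideal_quadratic S f :
  (forall mo, mo \in msupp f -> exists u v,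
     [/\ S ('X_u * 'X_v), u != v, (0 < mo u)%N & (0 < mo v)%N]) ->
  gen_ideal S f.
Proof.
move=> Hf; rewrite (mpolyE f); apply: gen_ideal_sum => mo /Hf[u [v [Suv uv mu mv]]].
have uv_le : (U_(u) + U_(v) <= mo)%MM.
  apply/mnm_lepP => i; rewrite mnmDE !mnm1E.
  case: (eqVneq u i) => [<-|_]; first by rewrite eq_sym (negbTE uv).
  by case: (eqVneq v i) => [<-|_].
rewrite -mul_mpolyC -(submK uv_le) mpolyXD mpolyXD mulrA.
exact/gen_ideal_mull/gen_ideal_gen.
Qed.

End GeneratedIdeal.

Section Zariski.
Variables (k : closedFieldType) (m : nat).
Implicit Types (Z : aset k m) (S : {mpoly k[m]} -> Prop).

Lemma zclosed_ext Z1 Z2 : (forall a, Z1 a <-> Z2 a) -> zclosed Z1 -> zclosed Z2.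
Proof. by move=> E [S ES]; exists S => a; rewrite -E. Qed.

Lemma not_zerosP S a : ~ zeros S a -> exists2 g, S g & g.@[a] != 0.
Proof.
move=> nza; apply: NNPP => nex; apply: nza => g Sg.
by apply/eqP; apply: contra_notT nex => ga; exists g.
Qed.

Lemma zclosed_nonvanishing Z a : zclosed Z -> ~ Z a ->
  exists g, vanishing Z g /\ g.@[a] != 0.
Proof.
move=> [S ES] nZa; have [g Sg ga] : exists2 g, S g & g.@[a] != 0.
  by apply: not_zerosP => /ES.
by exists g; split=> // b /ES; apply.
Qed.

Lemma zclosedI Z1 Z2 : zclosed Z1 -> zclosed Z2 -> zclosed (fun a => Z1 a /\ Z2 a).
Proof.
move=> [S1 E1] [S2 E2]; exists (fun h => S1 h \/ S2 h) => a; split.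
  by case=> /E1 z1 /E2 z2 h [/z1|/z2].
by move=> za; split; [apply/E1 | apply/E2] => h Sh; apply: za; [left|right].
Qed.

(* The union is cut out by the pairwise products of the equations. *)
Lemma zclosedU Z1 Z2 : zclosed Z1 -> zclosed Z2 -> zclosed (fun a => Z1 a \/ Z2 a).
Proof.
move=> [S1 E1] [S2 E2].
exists (fun h => exists g1 g2, [/\ S1 g1, S2 g2 & h = g1 * g2]) => a; split.
  case=> [/E1|/E2] za _ [g1 [g2 [S1g S2g ->]]]; rewrite mevalM.
    by rewrite (za g1) ?mul0r.
  by rewrite (za g2) ?mulr0.
move=> za; apply: NNPP => /not_or_and[/E1 n1 /E2 n2].
have [g1 S1g g1a] := not_zerosP n1.
have [g2 S2g g2a] := not_zerosP n2.
have /eqP := za (g1 * g2) (ex_intro _ g1 (ex_intro _ g2 (And3 S1g S2g erefl))).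
by rewrite mevalM mulf_eq0 (negbTE g1a) (negbTE g2a).
Qed.

Lemma zclosed_cover (I : eqType) (r : seq I) (Y : I -> aset k m) :
  (forall i, i \in r -> zclosed (Y i)) -> zclosed (fun a => exists2 i, i \in r & Y i a).
Proof.
elim: r => [|i r IHr] cY.
  exists (eq 1) => a; split=> [[]//|/(_ 1 erefl)/eqP].
  by rewrite meval1 oner_eq0.
apply: (zclosed_ext (Z1 := fun a => Y i a \/ exists2 j, j \in r & Y j a)).
  move=> a; split=> [[Yia|[j jr Yja]]|[j]]; first by exists i; rewrite ?mem_head.
    by exists j; rewrite // inE jr orbT.
  by rewrite inE => /orP[/eqP->|jr] Yja; [left|right; exists j].
apply: zclosedU; first by apply: cY; rewrite mem_head.
by apply: IHr => j jr; apply: cY; rewrite inE jr orbT.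
Qed.

Lemma irreducible_split Z Z1 Z2 : irreducible_closed Z -> zclosed Z1 -> zclosed Z2 ->
  subs Z (fun a => Z1 a \/ Z2 a) -> subs Z Z1 \/ subs Z Z2.
Proof.
move=> [cZ [_ irrZ]] c1 c2 ZU.
have ZU' a : Z a <-> (Z a /\ Z1 a) \/ (Z a /\ Z2 a).
  by split=> [Za|[[]|[]]//]; case: (ZU a Za); [left|right].
by have [sub|sub] := irrZ _ _ (zclosedI cZ c1) (zclosedI cZ c2) ZU';
  [left|right] => a /sub[].
Qed.

Lemma irreducible_sub_cover (I : eqType) (r : seq I) (Y : I -> aset k m) Z :
  irreducible_closed Z -> (forall i, i \in r -> zclosed (Y i)) ->
  (forall a, Z a -> exists2 i, i \in r & Y i a) -> exists2 i, i \in r & subs Z (Y i).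
Proof.
move=> irrZ; elim: r => [_ cov|i r IHr cY cov].
  by have [_ [[a Za] _]] := irrZ; have [] := cov a Za.
have cYr j : j \in r -> zclosed (Y j) by move=> jr; apply: cY; rewrite inE jr orbT.
have cov' a : Z a -> Y i a \/ exists2 j, j \in r & Y j a.
  move/cov=> [j]; rewrite inE => /orP[/eqP->|jr] Yja; [by left|by right; exists j].
have [sub|/(IHr cYr)[j jr sub]] := irreducible_split irrZ (cY i (mem_head i r))
  (zclosed_cover cYr) cov'.
  by exists i; rewrite ?mem_head.
by exists j; rewrite // inE jr orbT.
Qed.

End Zariski.

Section CoordinateSubspace.
Variables (k : closedFieldType) (m : nat).
Implicit Types (F U : {set 'I_m}) (f : {mpoly k[m]}) (mo : 'X_{1..m}) (i : 'I_m) (j : nat).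

Definition coord_subspace F : aset k m := fun a => forall i, i \notin F -> a i = 0.

Definition mnm_on F mo := forall i, i \notin F -> mo i = 0%N.

Lemma zclosed_coord_subspace F : zclosed (coord_subspace F).
Proof.
exists (fun h => exists2 i, i \notin F & h = 'X_i) => a; split.
  by move=> Wa _ [i iF ->]; rewrite mevalXU Wa.
by move=> za i iF; rewrite -(mevalXU a i); apply: za; exists i.
Qed.

Lemma meval_line f (a b : point k m) :
  exists q : {poly k}, forall t, q.[t] = f.@[fun i => a i + t * (b i - a i)].
Proof.
exists (mmap (@polyC k) (fun i => (a i)%:P + 'X * (b i - a i)%:P) f) => t.
rewrite mevalE /mmap horner_sum; apply: eq_bigr => mo _.
rewrite hornerM hornerC /mmap1 horner_prod; congr (_ * _); apply: eq_bigr => i _.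
by rewrite horner_exp hornerD hornerM hornerX !hornerC.
Qed.

(* Two polynomials not vanishing identically on the coordinate subspace have a
   common non-zero on the line through two witnesses. *)
Lemma irreducible_coord_subspace F : irreducible_closed (coord_subspace F).
Proof.
split; first exact: zclosed_coord_subspace.
split=> [|Z1 Z2 c1 c2 WU]; first by exists (fun=> 0).
apply: NNPP => /not_or_and[n1 n2].
have [a Wa /(zclosed_nonvanishing c1)[g1 [v1 g1a]]] : exists2 a, coord_subspace F a & ~ Z1 a.
  by apply: NNPP => H; apply: n1 => a Wa; apply: NNPP => nZa; apply: H; exists a.
have [b Wb /(zclosed_nonvanishing c2)[g2 [v2 g2b]]] : exists2 b, coord_subspace F b & ~ Z2 b.
  by apply: NNPP => H; apply: n2 => b Wb; apply: NNPP => nZb; apply: H; exists b.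
have [q1 q1E] := meval_line g1 a b; have [q2 q2E] := meval_line g2 a b.
have q1n0 : q1 != 0.
  apply: contraNneq g1a => q0; move: (q1E 0); rewrite q0 horner0 => ->.
  by apply/eqP; apply: meval_eq => i; rewrite mul0r addr0.
have q2n0 : q2 != 0.
  apply: contraNneq g2b => q0; move: (q2E 1); rewrite q0 horner0 => ->.
  by apply/eqP; apply: meval_eq => i; rewrite mul1r addrC subrK.
have /closed_nonrootP[t] := mulf_neq0 q1n0 q2n0.
have Wt : coord_subspace F (fun i => a i + t * (b i - a i)).
  by move=> i iF; rewrite Wa // Wb // subrr mulr0 addr0.
rewrite rootE hornerM q1E q2E.
by case/WU: Wt => [/v1|/v2] ->; rewrite ?mul0r ?mulr0 eqxx.
Qed.

Lemma meval_zero f : f.@[fun=> 0] = f@_0.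
Proof.
rewrite mevalE [in RHS](mpolyE f) raddf_sum /=; apply: eq_bigr => mo _.
rewrite mcoeffZ mcoeffX; congr (_ * _); case: (eqVneq mo 0%MM) => [->|mo0].
  by rewrite big1 // => i _; rewrite mnm0E expr0.
have [i moi] : exists i, mo i != 0%N.
  apply: NNPP => H; move/eqP: mo0; apply; apply/mnmP => i; rewrite mnm0E.
  by apply/eqP; apply: contra_notT H => moi; exists i.
by rewrite (bigD1 i) //= expr0n (negbTE moi) mul0r.
Qed.

(* [mslice f i j] is the coefficient of ['X_i ^+ j] when [f] is viewed as a
   polynomial in ['X_i] over the remaining variables. *)
Definition mslice f (i : 'I_m) (j : nat) : {mpoly k[m]} :=
  \sum_(mo <- msupp f | mo i == j) f@_mo *: 'X_[mo - U_(i) *+ j].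

Lemma mslice_decomp f i : f = \sum_(j < msize f) mslice f i j * 'X_i ^+ j.
Proof.
rewrite {1}(mpolyE f) (eq_bigr (fun j : 'I_(msize f) =>
    \sum_(mo <- msupp f | mo i == j) f@_mo *: 'X_[mo])); last first.
  move=> j _; rewrite /mslice mulr_suml; apply: eq_bigr => mo /eqP moij.
  rewrite -scalerAl mpolyXn -mpolyXD submK //; apply/mnm_lepP => l.
  by rewrite mulmnE mnm1E; case: eqP => [<-|]; rewrite ?mul1n ?mul0n // moij.
rewrite (exchange_big_dep xpredT) //=; apply: eq_big_seq => mo mos.
have moi : (mo i < msize f)%N.
  apply: leq_trans (msize_mdeg_lt mos); rewrite ltnS mdegE.
  by rewrite (bigD1 i) //= leq_addr.
rewrite (big_pred1 (Ordinal moi)) // => j /=.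
by rewrite eq_sym; apply/eqP/eqP => [E|->//]; apply: val_inj.
Qed.

Lemma meval_mslice f i j (a b : point k m) : (forall l, l != i -> a l = b l) ->
  (mslice f i j).@[a] = (mslice f i j).@[b].
Proof.
move=> ab; rewrite /mslice !rmorph_sum /=; apply: eq_bigr => mo /eqP moij.
rewrite !mevalZ !mevalX; congr (_ * _); apply: eq_bigr => l _.
case: (eqVneq l i) => [->|li]; last by rewrite ab.
by rewrite mnmBE mulmnE mnm1E eqxx mul1n moij subnn !expr0.
Qed.

Lemma mcoeff_mslice f i j (mu : 'X_{1..m}) : mu i = 0%N ->
  (mslice f i j)@_mu = f@_(mu + U_(i) *+ j)%MM.
Proof.
move=> mui; rewrite /mslice raddf_sum /= big_mkcond /=.
rewrite [in RHS](mpolyE f) raddf_sum /=; apply: eq_bigr => mo _.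
rewrite mcoeffZ mcoeffX mcoeffZ mcoeffX.
case: eqP => [moij|moij]; last first.
  case: (eqVneq mo (mu + U_(i) *+ j)%MM) => [E|_]; last by rewrite mulr0.
  by case: moij; rewrite E mnmDE mulmnE mnm1E eqxx mui mul1n.
congr (_ * (nat_of_bool _)%:R); apply/idP/idP => /eqP E; apply/eqP.
  rewrite -E; apply/mnmP => l; rewrite mnmDE mnmBE mulmnE mnm1E.
  by case: eqP => [<-|]; rewrite ?mul1n ?mul0n ?subn0 ?addn0 // moij subnK.
by rewrite E addmK.
Qed.

Lemma mslice_vanishing F f i j : i \in F ->
  (forall a, coord_subspace F a -> f.@[a] = 0) ->
  (j < msize f)%N -> forall a, coord_subspace F a -> (mslice f i j).@[a] = 0.
Proof.
move=> iF f0 jf a Wa.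
pose q : {poly k} := \poly_(l < msize f) (mslice f i l).@[a].
suff /eqP : q == 0 by move/(congr1 (coefp j))=> /=; rewrite coef_poly jf coef0.
apply: contraT => /closed_nonrootP[t]; rewrite rootE horner_poly.
pose b := fun l => if l == i then t else a l.
have Wb : coord_subspace F b.
  by move=> l lF; rewrite /b; case: eqP => [li|_]; [rewrite li iF in lF | apply: Wa].
have fbE : f.@[b] = \sum_(l < msize f) (mslice f i l).@[a] * t ^+ l.
  rewrite {1}(mslice_decomp f i) rmorph_sum /=; apply: eq_bigr => l _.
  rewrite mevalM rmorphXn /= mevalXU /b eqxx.
  by congr (_ * _); apply: meval_mslice => l' /negbTE->.
by rewrite -fbE f0 // eqxx.
Qed.

Lemma coord_subspace_vanishingP F f :
  (forall a, coord_subspace F a -> f.@[a] = 0) <-> (forall mo, mnm_on F mo -> f@_mo = 0).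
Proof.
split; last first.
  move=> f0 a Wa; rewrite mevalE; apply: big1_seq => mo _.
  case: (boolP [forall i, (i \notin F) ==> (mo i == 0%N)]) => [/forallP moF|].
    by rewrite f0 ?mul0r // => i iF; apply/eqP; move: (moF i); rewrite iF.
  case/forallPn=> i; rewrite negb_imply => /andP[iF moi].
  by rewrite (bigD1 i) //= Wa // expr0n (negbTE moi) mul0r mulr0.
elim: {F}_.+1 {-2}F (ltnSn #|F|) f => // c IHc F ltF f f0 mo moF.
have [F0|[i iF]] := set_0Vmem F.
  have -> : mo = 0%MM by apply/mnmP => i; rewrite mnm0E moF // F0 inE.
  by rewrite -meval_zero f0.
have [//|fmo] := eqVneq f@_mo 0.
have moi : (mo i < msize f)%N.
  have mos : mo \in msupp f by rewrite mcoeff_msupp.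
  apply: leq_trans (msize_mdeg_lt mos).
  by rewrite ltnS mdegE (bigD1 i) //= leq_addr.
have le_mo : (U_(i) *+ mo i <= mo)%MM.
  apply/mnm_lepP => l; rewrite mulmnE mnm1E.
  by case: eqP => [<-|]; rewrite ?mul1n ?mul0n.
have mui : (mo - U_(i) *+ mo i)%MM i = 0%N by rewrite mnmBE mulmnE mnm1E eqxx mul1n subnn.
rewrite -(submK le_mo) -mcoeff_mslice //; apply: (IHc (F :\ i)).
- by move: ltF; rewrite (cardsD1 i F) iF.
- move=> a Wa; apply: (mslice_vanishing iF f0 moi) => l lF; apply: Wa.
  by rewrite in_setD1 negb_and lF orbT.
- move=> l; rewrite in_setD1 negb_and negbK => /orP[/eqP->//|lF].
  by rewrite mnmBE moF.
Qed.

(* Multiplying by the monomial [prod_(u in U) X_u] turns vanishing on the open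
   subset into vanishing on the whole coordinate subspace. *)
Lemma mcoeff_vanishing_coord_open F U f : U \subset F ->
  (forall a, coord_subspace F a -> (forall u, u \in U -> a u != 0) -> f.@[a] = 0) ->
  forall mo, mnm_on F mo -> f@_mo = 0.
Proof.
move=> UF f0 mo moF.
pose mU : 'X_{1..m} := [multinom (i \in U : nat) | i < m].
rewrite -(mcoeffMX f mU); apply: (proj1 (coord_subspace_vanishingP F _)); last first.
  move=> i iF; rewrite mnmDE moF // addn0 mnmE.
  by apply/eqP; rewrite eqb0; apply: contra iF; apply/subsetP.
move=> a Wa; rewrite mevalM mevalX.
case: (boolP [forall u in U, a u != 0]) => [/forall_inP aU|].
  by rewrite f0 ?mul0r.
case/forall_inPn=> u uU /negPn/eqP au.
by rewrite (bigD1 u) //= mnmE uU au expr1 mul0r mulr0.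
Qed.

End CoordinateSubspace.

Section ChainLength.
Variables (k : closedFieldType) (m : nat).
Implicit Types (Z : aset k m) (f p : {mpoly k[m]}) (A B : seq {mpoly k[m]}).

Lemma zclosed_hypersurface f : zclosed (fun a => f.@[a] = 0).
Proof. by exists (eq f) => a; split=> [fa _ <- //|]; apply. Qed.

Definition vdeg_le (D : nat) p := forall mo, p@_mo != 0 -> forall i, (mo i <= D)%N.

Lemma vdeg_le_mono D D' p : (D <= D')%N -> vdeg_le D p -> vdeg_le D' p.
Proof. by move=> DD' pD mo /pD moD i; apply: leq_trans (moD i) DD'. Qed.

Lemma vdeg_leM D1 D2 p1 p2 : vdeg_le D1 p1 -> vdeg_le D2 p2 -> vdeg_le (D1 + D2) (p1 * p2).
Proof.
move=> p1D p2D mo; rewrite -mcoeff_msupp => /msuppM_le /allpairsP[[mo1 mo2] /= [s1 s2 ->]] i.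
by rewrite mnmDE leq_add //; [apply: p1D | apply: p2D]; rewrite -mcoeff_msupp.
Qed.

Lemma vdeg_le_msize p : vdeg_le (msize p) p.
Proof.
move=> mo; rewrite -mcoeff_msupp => /msize_mdeg_lt lt i.
by apply: leq_trans (ltnW lt); rewrite mdegE (bigD1 i) //= leq_addr.
Qed.

Definition lin_comb (c : nat -> k) A : {mpoly k[m]} := \sum_(i < size A) c i *: nth 0 A i.

Definition lin_indep_on Z (L : nat) A :=
  (forall p, p \in A -> vdeg_le L p) /\
  forall c, vanishing Z (lin_comb c A) -> forall i, (i < size A)%N -> c i = 0.

Lemma lin_comb_cat_mul c f A B :
  lin_comb c (A ++ map ( *%R f) B) = lin_comb c A + f * lin_comb (fun j => c (size A + j)%N) B.
Proof.
rewrite /lin_comb size_cat size_map big_split_ord /=; congr (_ + _).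
  by apply: eq_bigr => i _; rewrite nth_cat ltn_ord.
rewrite mulr_sumr; apply: eq_bigr => j _.
by rewrite nth_cat ltnNge leq_addr /= addKn (nth_map 0) // scalerAr.
Qed.

Lemma lin_indep_on_extend Z Z' L d f A B :
  subs Z Z' -> irreducible_closed Z' -> vanishing Z f -> ~ vanishing Z' f ->
  vdeg_le d f -> lin_indep_on Z L A -> lin_indep_on Z' L B ->
  lin_indep_on Z' (L + d) (A ++ map ( *%R f) B).
Proof.
move=> ZZ' irrZ' Zf Z'f fd [AL indepA] [BL indepB]; split.
  move=> p; rewrite mem_cat => /orP[/AL|/mapP[q /BL qL ->]].
    by apply: vdeg_le_mono; rewrite leq_addr.
  by rewrite addnC; apply: vdeg_leM.
move=> c; rewrite lin_comb_cat_mul => Z'c.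
set g := lin_comb (fun j => c (size A + j)%N) B.
have cA i : (i < size A)%N -> c i = 0.
  by apply: indepA => a Za; move: (Z'c a (ZZ' a Za)); rewrite mevalD mevalM Zf // mul0r addr0.
have A0 : lin_comb c A = 0 by apply: big1 => i _; rewrite cA // scale0r.
have Z'fg : subs Z' (fun a => f.@[a] = 0 \/ g.@[a] = 0).
  by move=> a /Z'c; rewrite A0 add0r mevalM => /eqP; rewrite mulf_eq0 => /orP[]/eqP; [left|right].
have [//|Z'g] := irreducible_split irrZ' (zclosed_hypersurface f) (zclosed_hypersurface g) Z'fg.
move=> i; rewrite size_cat size_map => ilt.
have [/cA //|Ai] := ltnP i (size A).
by rewrite -(subnKC Ai) (indepB _ Z'g) // -(ltn_add2l (size A)) subnKC.
Qed.

Lemma lin_indep_on_iter Z Z' L d f A :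
  subs Z Z' -> irreducible_closed Z' -> vanishing Z f -> ~ vanishing Z' f ->
  vdeg_le d f -> lin_indep_on Z L A ->
  forall J, exists2 B, lin_indep_on Z' (L + J * d) B & size B = (J * size A)%N.
Proof.
move=> ZZ' irrZ' Zf Z'f fd [AL indepA]; elim=> [|J [B indepB sB]].
  by exists [::] => //; split=> // c _ i; rewrite ltn0.
have indepA' : lin_indep_on Z (L + J * d) A.
  by split=> // p /AL; apply: vdeg_le_mono; rewrite leq_addr.
exists (A ++ map ( *%R f) B); last by rewrite size_cat size_map sB mulSn.
rewrite mulSn [(d + _)%N]addnC addnA.
exact: (lin_indep_on_extend ZZ' irrZ' Zf Z'f fd indepA' indepB).
Qed.

Lemma exists_left_kernel (F : fieldType) r c (M : 'M[F]_(r, c)) :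
  (c < r)%N -> exists2 v : 'rV_r, v != 0 & v *m M = 0.
Proof.
move=> lt_cr; have : ~~ row_free M.
  by rewrite -row_leq_rank -ltnNge (leq_ltn_trans (rank_leq_col M)).
by rewrite -kermx_eq0 => /rowV0Pn[v /sub_kermxP vM v0]; exists v.
Qed.

(* The functions of degree at most [L] in each variable on [coord_subspace F]
   are spanned by the [(L+1) ^ #|F|] monomials supported in [F]. *)
Lemma size_lin_indep_on_coord F Z L A : subs Z (coord_subspace F) ->
  lin_indep_on Z L A -> (size A <= L.+1 ^ #|F|)%N.
Proof.
move=> ZF [AL indepA].
pose Ix := {ffun {x : 'I_m | x \in F} -> 'I_L.+1}.
have cardIx : #|{: Ix}| = (L.+1 ^ #|F|)%N.
  by rewrite card_ffun card_ord card_sig; congr (_ ^ _)%N; apply: eq_card.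
pose mnm_of (e : Ix) : 'X_{1..m} :=
  [multinom oapp (fun x => nat_of_ord (e x)) 0%N (insub i) | i < m].
pose M := \matrix_(i < size A, j < #|{: Ix}|) (nth 0 A i)@_(mnm_of (enum_val j)).
rewrite -cardIx leqNgt; apply/negP => /(exists_left_kernel M)[v v0 vM].
pose c i := oapp (v 0) 0 (insub i).
have cE (i : 'I_(size A)) : c i = v 0 i by rewrite /c valK.
suff c0 : forall i, (i < size A)%N -> c i = 0.
  by case/eqP: v0; apply/rowP => i; rewrite mxE -cE c0.
apply: indepA => a /ZF; move: a; apply/coord_subspace_vanishingP => mo moF.
rewrite /lin_comb raddf_sum /=.
have [/forallP moL|/forallPn[i]] := boolP [forall i, mo i <= L]%N.
  pose e : Ix := [ffun x => inord (mo (val x))].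
  have moE : mnm_of e = mo.
    apply/mnmP => i; rewrite mnmE; case: insubP => [x iF <-|iF] /=.
      by rewrite ffunE inordK ?ltnS.
    by rewrite moF.
  have := congr1 (fun w : 'rV_#|{: Ix}| => w 0 (enum_rank e)) vM; rewrite !mxE.
  by apply: etrans; apply: eq_bigr => i _; rewrite mcoeffZ cE mxE enum_rankK moE.
rewrite -ltnNge => moi; apply: big1 => j _; rewrite mcoeffZ.
have [->|Ajmo] := eqVneq (nth 0 A j)@_mo 0; first by rewrite mulr0.
by move: (AL _ (mem_nth 0 (ltn_ord j)) _ Ajmo i); rewrite leqNgt moi.
Qed.

(* [growth_le Z e j]: the number of independent functions on [Z] of degree at
   most [L] in each variable is [O(L ^ (e - j))]. Each strict step of a chain of
   irreducible closed sets gains a factor [L] (lemma [lin_indep_on_iter]). *)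
Definition growth_le Z (e j : nat) := exists c, forall L A,
  lin_indep_on Z L A -> (size A * L.+1 ^ j <= c * L.+1 ^ e)%N.

Lemma growth_le_coord F Z : subs Z (coord_subspace F) -> growth_le Z #|F| 0.
Proof.
by move=> ZF; exists 1%N => L A /(size_lin_indep_on_coord ZF); rewrite expn0 muln1 mul1n.
Qed.

Lemma growth_le_step Z Z' e j : zclosed Z -> psubs Z Z' -> irreducible_closed Z' ->
  growth_le Z' e j -> growth_le Z e j.+1.
Proof.
move=> cZ [ZZ' [a [Z'a nZa]]] irrZ' [c Z'c].
have [f [Zf fa]] := zclosed_nonvanishing cZ nZa.
have Z'f : ~ vanishing Z' f by move=> /(_ a Z'a) /eqP; apply/negP.
exists (c * (msize f).+1 ^ e)%N => L A indepA.
have [B indepB sB] := lin_indep_on_iter ZZ' irrZ' Zf Z'f (@vdeg_le_msize f) indepA L.+1.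
set d := msize f.
have E : (L + L.+1 * d).+1 = (L.+1 * d.+1)%N by rewrite mulnS addSn.
have := Z'c _ _ indepB; rewrite E sB !expnMn => le_c.
rewrite expnS mulnCA mulnA [X in (_ <= X)%N]mulnAC -[X in (_ <= X)%N]mulnA.
by apply: leq_trans le_c; rewrite leq_mul2l leq_pmulr ?orbT // expn_gt0.
Qed.

(* A chain of irreducible closed subsets of [coord_subspace F] has length at most
   [#|F|]: otherwise the constant [1] would have growth [L ^ d] beyond [L ^ #|F|]. *)
Lemma chain_length_le_coord F d (Zc : nat -> aset k m) :
  (forall i, (i <= d)%N -> irreducible_closed (Zc i)) ->
  (forall i, (i < d)%N -> psubs (Zc i) (Zc i.+1)) ->
  subs (Zc d) (coord_subspace F) -> (d <= #|F|)%N.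
Proof.
move=> irrZ ltZ ZF.
have growthZ j : (j <= d)%N -> growth_le (Zc (d - j)%N) #|F| j.
  elim: j => [_|j IHj jd]; first by rewrite subn0; apply: growth_le_coord.
  have jd' : (d - j.+1 < d)%N by rewrite ltn_subrL (leq_ltn_trans (leq0n j) jd).
  apply: growth_le_step (IHj (ltnW jd)); first by case: (irrZ _ (leq_subr j.+1 d)).
    by move: (ltZ _ jd'); rewrite -subSn // subSS.
  exact/irrZ/leq_subr.
have [c Zc0] := growthZ d (leqnn d); rewrite subnn in Zc0.
have [_ [[a Za] _]] := irrZ 0%N (leq0n d).
have indep1 L : lin_indep_on (Zc 0%N) L [:: 1].
  split=> [p /[!inE] /eqP-> mo|c' /(_ a Za)].
    by rewrite mcoeff1; case: (eqVneq mo 0%MM) => [-> _ i|_]; rewrite ?mnm0E ?eqxx.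
  by rewrite /lin_comb big_ord1 /= mevalZ meval1 mulr1 => c'0 [|].
have := Zc0 c _ (indep1 c); rewrite /= mul1n.
case: c {Zc0 indep1} => [|c le_d]; first by rewrite mul0n leqn0 expn_eq0.
rewrite -ltnS -(@ltn_exp2l c.+2) //.
apply: leq_ltn_trans le_d _.
by rewrite expnS ltn_mul2r expn_gt0 ltnSn.
Qed.

End ChainLength.

Lemma row_free_rowsub_id (F : fieldType) d m (r : 'I_d -> 'I_m) :
  injective r -> row_free (rowsub r (1%:M : 'M[F]_m)).
Proof.
move=> r_inj; apply/inj_row_free => v /rowP vr0; apply/rowP => i.
move: (vr0 (r i)); rewrite !mxE (bigD1 i) //= big1 ?addr0.
  by rewrite !mxE eqxx mulr1.
by move=> l li; rewrite !mxE (inj_eq r_inj) (negbTE li) mulr0.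
Qed.

Lemma rank_le_support (F : fieldType) r m (S : {set 'I_m}) (B : 'M[F]_(r, m)) :
  (forall i j, j \notin S -> B i j = 0) -> (\rank B <= #|S|)%N.
Proof.
move=> BS; suff -> : B = colsub (@enum_val _ (mem S)) B *m rowsub enum_val (1%:M : 'M[F]_m).
  by apply: leq_trans (mxrankM_maxl _ _) (rank_leq_col _).
apply/matrixP => i j; rewrite mxE.
have [jS|jS] := boolP (j \in S); last first.
  rewrite BS // big1 // => l _; rewrite !mxE; case: eqP => [ej|_]; last by rewrite mulr0.
  by move: (enum_valP l); rewrite ej (negbTE jS).
rewrite (bigD1 (enum_rank_in jS j)) //= big1 ?addr0.
  by rewrite !mxE enum_rankK_in // eqxx mulr1.
move=> l lj; rewrite !mxE; case: eqP => [ej|_]; last by rewrite mulr0.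
by case/eqP: lj; apply: enum_val_inj; rewrite enum_rankK_in // -ej.
Qed.

Section Geometry.
Variables (k : closedFieldType) (m : nat).
Local Notation W := (@coord_subspace k m).

Lemma subs_coord_subspace (F F' : {set 'I_m}) :
  F \subset F' -> subs (W F) (W F').
Proof. by move=> FF' a Wa i iF'; apply: Wa; apply: contra iF'; apply/subsetP. Qed.

(* The coordinate subspaces of the initial segments of [enum F]. *)
Lemma coord_subspace_chain (F : {set 'I_m}) :
  exists Zc : nat -> aset k m,
  [/\ forall i, irreducible_closed (Zc i) /\ subs (Zc i) (W F),
      forall i, (i < #|F|)%N -> psubs (Zc i) (Zc i.+1)
    & subs (W F) (Zc #|F|)].
Proof.
pose Fc i := [set x in F | (index x (enum F) < i)%N].
exists (fun i => W (Fc i)); split.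
- move=> i; split; first exact: irreducible_coord_subspace.
  by apply: subs_coord_subspace; apply/subsetP => x; rewrite inE => /andP[].
- move=> i ltiF; split.
    apply: subs_coord_subspace; apply/subsetP => x; rewrite !inE.
    by case/andP=> -> /ltnW.
  have lti : (i < size (enum F))%N by rewrite -cardE.
  set x := nth (enum_val (Ordinal ltiF)) (enum F) i.
  have xF : x \in F by rewrite -mem_enum mem_nth.
  have ix : index x (enum F) = i by rewrite index_uniq // enum_uniq.
  exists (fun j => (j == x)%:R); split.
    by move=> j; rewrite inE ltnS -ix; case: eqP => // ->; rewrite xF leqnn.
  move/(_ x); rewrite inE xF ix ltnn eqxx => /(_ isT)/eqP; by rewrite oner_eq0.
- move=> a Wa x; rewrite inE negb_and => /orP[/Wa //|].
  by rewrite cardE index_mem mem_enum => /Wa.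
Qed.

Lemma meval_mderivX (u x : 'I_m) (p : point k m) :
  (mderiv u ('X_x : {mpoly k[m]})).@[p] = (x == u)%:R.
Proof.
rewrite mderivX mnm1E; case: (eqVneq x u) => [->|] /=; last by rewrite scale0r meval0.
rewrite scale1r (_ : U_(u) - U_(u) = 0)%MM ?mevalX.
  by rewrite big1 // => i _; rewrite mnm0E expr0.
by apply/mnmP => i; rewrite mnmBE subnn mnm0E.
Qed.

Lemma meval_mderivXX (u x y : 'I_m) (p : point k m) :
  (mderiv u ('X_x * 'X_y : {mpoly k[m]})).@[p] = (x == u)%:R * p y + p x * (y == u)%:R.
Proof. by rewrite mderivM mevalD !mevalM !meval_mderivX !mevalXU. Qed.

Lemma vanishing_zariski_closure (Z : aset k m) f :
  vanishing (zariski_closure Z) f <-> vanishing Z f.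
Proof. by split=> [fZ a Za|fZ a]; [apply: fZ => g; apply | apply]. Qed.

End Geometry.

Section EdgeIdeal.
Variables (k : closedFieldType) (n : nat) (G : rel 'I_n).
Hypotheses (Gsym : ssrbool.symmetric G) (Girr : irreflexive G).
Local Notation X := (@XG k n G).
Local Notation W := (@coord_subspace k n).
Implicit Types (S : {set 'I_n}) (p : point k n).

Definition indep S := [forall x in S, forall y in S, ~~ G x y].

Definition maximal_indep S := indep S /\ forall v, v \notin S -> exists2 w, w \in S & G v w.

Definition supp p := [set i | p i != 0].

(* Their coordinates can be moved freely at [p] without leaving [X]. *)
Definition free_vertices p := [set u | [forall w in supp p, ~~ G u w]].

Lemma indepP S : reflect (forall x y, x \in S -> y \in S -> ~~ G x y) (indep S).
Proof.
apply: (iffP forall_inP) => [indS x y xS yS|indS x xS].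
  by have /forall_inP := indS x xS; apply.
by apply/forall_inP => y; apply: indS.
Qed.

Lemma XGP p : X p <-> forall x y, G x y -> p x * p y = 0.
Proof.
apply: iff_trans (zeros_gen_idealP _ _) _; split=> [Xp x y Gxy|Xp _ [x [y [Gxy ->]]]].
  by have := Xp _ (ex_intro _ x (ex_intro _ y (conj Gxy erefl))); rewrite mevalM !mevalXU.
by rewrite mevalM !mevalXU Xp.
Qed.

Lemma coord_subspace_supp p : W (supp p) p.
Proof. by move=> i; rewrite inE negbK => /eqP. Qed.

Lemma supp_indep p : X p -> indep (supp p).
Proof.
move/XGP=> Xp; apply/indepP => x y; rewrite !inE => px py; apply/negP => /Xp /eqP.
by rewrite mulf_eq0 (negbTE px) (negbTE py).
Qed.

Lemma coord_subspace_indep_sub S : indep S -> subs (W S) X.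
Proof.
move/indepP=> indS a Wa; apply/XGP => x y Gxy.
have [xS|/Wa->] := boolP (x \in S); last by rewrite mul0r.
have [yS|/Wa->] := boolP (y \in S); last by rewrite mulr0.
by move: (indS x y xS yS); rewrite Gxy.
Qed.

(* [X] is the finite union of the coordinate subspaces of the independent sets. *)
Lemma irreducible_sub_indep Z p : irreducible_closed Z -> subs Z X -> Z p ->
  exists S, [/\ indep S, subs Z (W S) & supp p \subset S].
Proof.
move=> irrZ ZX Zp.
have [|a Za|S] := @irreducible_sub_cover _ _ _ [seq S <- enum {set 'I_n} | indep S] W Z irrZ.
- by move=> S _; apply: zclosed_coord_subspace.
- exists (supp a); last exact: coord_subspace_supp.
  by rewrite mem_filter mem_enum andbT; apply/supp_indep/ZX.
rewrite mem_filter mem_enum andbT => indS ZS; exists S; split=> //.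
by apply/subsetP => i; rewrite inE; apply: contraR => iS; rewrite (ZS p Zp i iS).
Qed.

Lemma chain_at_bound p d Zc : chain_at X p d Zc ->
  exists S, [/\ indep S, supp p \subset S & (d <= #|S|)%N].
Proof.
move=> [irrZ [ltZ Zdp]].
have [irrZd ZdX] := irrZ d (leqnn d).
have [S [indS ZdS pS]] := irreducible_sub_indep irrZd ZdX Zdp.
exists S; split=> //; apply: (chain_length_le_coord (Zc := Zc)) => // i id.
by case: (irrZ i id).
Qed.

Lemma vanishing_XG f : vanishing X f -> gen_ideal (edge_gens G) f.
Proof.
move=> Xf; apply: gen_ideal_quadratic => mo mos; apply: NNPP => noedge.
have indS : indep [set i | mo i != 0%N].
  apply/indepP => x y; rewrite !inE => mx my; apply/negP => Gxy; apply: noedge.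
  exists x, y; split; rewrite ?lt0n //; first by exists x, y.
  by apply: contraTneq Gxy => ->; rewrite Girr.
move: mos; rewrite mcoeff_msupp => /eqP; apply.
apply: (proj1 (coord_subspace_vanishingP _ _)) => [a /(coord_subspace_indep_sub indS)|i].
  exact: Xf.
by rewrite inE negbK => /eqP.
Qed.

Lemma vanishing_XG_edge x y : G x y -> vanishing X ('X_x * 'X_y).
Proof. by move=> Gxy a /XGP Xa; rewrite mevalM !mevalXU Xa. Qed.

Lemma free_vertices_nbr p u w : u \in free_vertices p -> G u w -> p w = 0.
Proof.
rewrite inE => /forall_inP uT Guw; apply/eqP; apply: contraTT Guw => pw.
by apply: uT; rewrite inE.
Qed.

Lemma tangent_vec_unit p u : X p -> u \in free_vertices p -> tangent_vec X p (row u 1%:M).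
Proof.
move=> /XGP Xp uT f fX.
rewrite (bigD1 u) //= big1 ?addr0 => [|i iu]; last by rewrite !mxE eq_sym (negbTE iu) mulr0.
have [r [Sr ->]] := vanishing_XG fX.
rewrite !mxE eqxx mulr1 (raddf_sum (mderiv u)) rmorph_sum /=.
apply: big1_seq => q /andP[_ /Sr[x [y [Gxy ->]]]].
rewrite mderivM rmorphD /= !mevalM !mevalXU meval_mderivXX.
rewrite Xp // mulr0 add0r.
case: (eqVneq x u) => [xu|_]; case: (eqVneq y u) => [yu|_].
- by move: Gxy; rewrite xu yu Girr.
- by rewrite (free_vertices_nbr uT (w := y)) -?xu // !(mulr0, mul0r, addr0).
- rewrite (free_vertices_nbr uT (w := x)) -?yu; last by rewrite Gsym.
  by rewrite !(mulr0, mul0r, add0r).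
- by rewrite !(mulr0, mul0r, addr0).
Qed.

Lemma tangent_vec_zero p v j w : X p -> G j w -> p w != 0 -> tangent_vec X p v -> v 0 j = 0.
Proof.
move=> /XGP Xp Gjw pw /(_ _ (vanishing_XG_edge Gjw)).
have /eqP : p j * p w = 0 := Xp _ _ Gjw; rewrite mulf_eq0 (negbTE pw) orbF => /eqP pj.
rewrite (bigD1 j) //= big1 ?addr0 => [|i ij]; last first.
  by rewrite meval_mderivXX pj eq_sym (negbTE ij) !(mul0r, add0r).
rewrite meval_mderivXX pj eqxx mul0r addr0 mul1r => /eqP.
by rewrite mulf_eq0 (negbTE pw) => /eqP.
Qed.

Lemma free_vertices_indep p : smooth_locus X p -> indep (free_vertices p).
Proof.
move=> [Xp [d [[[Zc chainZ] _] [_ tangent_ub]]]].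
have [S [indS pS dS]] := chain_at_bound chainZ.
have ST : S \subset free_vertices p.
  apply/subsetP => u uS; rewrite inE; apply/forall_inP => w wp.
  by move/indepP: indS; apply => //; apply: (subsetP pS).
have Td : (#|free_vertices p| <= d)%N.
  rewrite leqNgt; apply/negP => ltdT.
  pose r (i : 'I_d.+1) := enum_val (widen_ord ltdT i).
  have r_inj : injective r by move=> i j /enum_val_inj/(congr1 val)/= /val_inj.
  have : ~~ row_free (rowsub r (1%:M : 'M[k]_n)).
    by apply: tangent_ub => i; rewrite row_rowsub; apply: tangent_vec_unit Xp (enum_valP _).
  by rewrite row_free_rowsub_id.
by have /eqP <- : S == free_vertices p by rewrite eqEcard ST (leq_trans Td dS).
Qed.

Lemma local_dim_max_indep p S : maximal_indep S -> supp p = S -> local_dim X p #|S|.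
Proof.
move=> [indS maxS] pS; split.
  have [Zc [irrZ ltZ SZ]] := coord_subspace_chain k S.
  exists Zc; split; [|split] => //.
    move=> i _; have [irrZi ZiS] := irrZ i; split=> // a /ZiS.
    exact: coord_subspace_indep_sub.
  by apply: SZ; rewrite -pS; apply: coord_subspace_supp.
move=> d Zc /chain_at_bound[S' [indS' pS' dS']].
apply: leq_trans dS' (subset_leq_card _); apply/subsetP => v vS'; apply: contraT => vS.
have [w wS Gvw] := maxS v vS.
have wS' : w \in S' by apply: (subsetP pS'); rewrite pS.
by move/indepP: indS' => /(_ v w vS' wS'); rewrite Gvw.
Qed.

Lemma tangent_dim_max_indep p S : X p -> maximal_indep S -> supp p = S ->
  tangent_dim X p #|S|.
Proof.
move=> Xp [indS maxS] pS; split.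
  exists (rowsub enum_val 1%:M); split; first exact/row_free_rowsub_id/enum_val_inj.
  move=> i; rewrite row_rowsub; apply: tangent_vec_unit => //; rewrite inE.
  apply/forall_inP => w; rewrite pS => wS.
  by move/indepP: indS; apply => //; apply: enum_valP.
move=> B tB; rewrite -row_leq_rank -ltnNge ltnS; apply: rank_le_support => r j jS.
have [w wS Gjw] := maxS j jS.
have pw : p w != 0 by move: wS; rewrite -pS inE.
by have := tangent_vec_zero Xp Gjw pw (tB r); rewrite mxE.
Qed.

Lemma smooth_locus_max_indep p S : maximal_indep S -> supp p = S -> smooth_locus X p.
Proof.
move=> maxS pS.
have Xp : X p by apply: (coord_subspace_indep_sub maxS.1); rewrite -pS; apply: coord_subspace_supp.
split=> //; exists #|S|; split; first exact: local_dim_max_indep.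
exact: tangent_dim_max_indep.
Qed.

Lemma maximal_indep_ext V : indep V -> exists2 S, maximal_indep S & V \subset S.
Proof.
move=> indV; have indVV : indep V && (V \subset V) by rewrite indV subxx.
have [S /andP[indS VS] Smax] :=
  @arg_maxnP _ V (fun S => indep S && (V \subset S)) (fun S => #|S|) indVV.
exists S => //; split=> // v vS; apply: NNPP => noadj.
have indvS : indep (v |: S).
  apply/indepP => x y; rewrite !inE => /orP[/eqP->|xS] /orP[/eqP->|yS].
  - by rewrite Girr.
  - by apply/negP => Gvy; apply: noadj; exists y.
  - by apply/negP => Gxv; apply: noadj; exists x; rewrite // Gsym.
  - by move/indepP: indS; apply.
have := Smax (v |: S); rewrite indvS (subset_trans VS (subsetUr _ _)) => /(_ isT).
by rewrite cardsU1 vS /geq /= ltnn.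
Qed.

End EdgeIdeal.

Section JetScheme.
Variables (k : closedFieldType) (n s : nat) (G : rel 'I_n).
Hypotheses (Gsym : ssrbool.symmetric G) (Girr : irreflexive G).
Local Notation X := (@XG k n G).
Local Notation J := (@jet_scheme k n s G).
Local Notation jv := (@jv n s).
Local Notation PC := (@PC_edge_gens k n s G).
Implicit Types (S : {set 'I_n}) (a : point k (n * s.+1)).

Lemma jv_inj x y i j : jv x i = jv y j -> x = y /\ i = j.
Proof.
move/(congr1 (fun u => enum_val (cast_ord (esym (mxvec_cast n s.+1)) u))).
by rewrite /jv /mxvec_index !cast_ordK !enum_rankK => -[-> ->].
Qed.

Lemma jv_surj u : exists x i, u = jv x i.
Proof. by case/mxvec_indexP: u => x i; exists x, i. Qed.

Definition jet_vars S := [set jv x i | x in S, i in [set: 'I_s.+1]].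

Lemma mem_jet_vars S x i : (jv x i \in jet_vars S) = (x \in S).
Proof.
apply/imset2P/idP => [[y j yS _ /jv_inj[-> _]] //|xS].
by exists x i; rewrite ?inE.
Qed.

Lemma meval_jet_coef a x y l : (l < s.+1)%N ->
  ((xt k s x * xt k s y)`_l).@[a] =
  \sum_(j < l.+1) a (jv x (inord j)) * a (jv y (inord (l - j))).
Proof.
move=> ls; rewrite coefM rmorph_sum; apply: eq_bigr => j _.
have js : (j < s.+1)%N by apply: leq_ltn_trans ls; rewrite -ltnS.
by rewrite /= mevalM !coef_poly js (leq_ltn_trans (leq_subr _ _) ls) !mevalXU.
Qed.

(* The coefficient of [t ^ l] in [x_w(t) x_x(t)] is [a_w^(0) a_x^(l)] plus terms
   in the [a_x^(j)], [j < l]. *)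
Lemma jet_scheme_nbr_zero a w x : J a -> G w x -> a (jv w ord0) != 0 ->
  forall i, a (jv x i) = 0.
Proof.
move=> /zeros_gen_idealP Ja Gwx aw0.
suff ax0 l : (l < s.+1)%N -> a (jv x (inord l)) = 0.
  by move=> i; rewrite -(ax0 i (ltn_ord i)) inord_val.
elim/ltn_ind: l => l IHl ls.
have := Ja _ (ex_intro _ w (ex_intro _ x (ex_intro _ (inord l) (conj Gwx erefl)))).
rewrite meval_jet_coef ?inordK // big_ord_recl big1 ?addr0 => [|j _].
  rewrite subn0 (_ : inord 0 = ord0) => [/eqP|]; last by apply: val_inj; rewrite /= inordK.
  by rewrite mulf_eq0 (negbTE aw0) => /eqP.
rewrite IHl ?mulr0 ?(leq_ltn_trans (leq_subr _ _) ls) //.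
by rewrite lift0 ltn_subrL /= (leq_ltn_trans (leq0n j) (ltn_ord j)).
Qed.

(* If [x] has a neighbour in the support of [pi_s a], all its jet coordinates vanish;
   otherwise [x] is a free vertex, and free vertices are independent at smooth points. *)
Lemma PC_edge_gens_vanish a g : J a -> smooth_locus X (pi_s a) ->
  PC g -> g.@[a] = 0.
Proof.
move=> Ja /(free_vertices_indep Gsym Girr) /indepP indT [x [y [i [j [Gxy ->]]]]].
rewrite mevalM !mevalXU.
have nbr_zero z l : z \notin free_vertices G (pi_s a) -> a (jv z l) = 0.
  rewrite inE => /forall_inPn[w]; rewrite inE => aw /negbNE Gzw.
  by apply: (jet_scheme_nbr_zero Ja _ aw); rewrite Gsym.
have [xT|/nbr_zero->] := boolP (x \in free_vertices G (pi_s a)); last by rewrite mul0r.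
have [yT|/nbr_zero->] := boolP (y \in free_vertices G (pi_s a)); last by rewrite mulr0.
by move: (indT x y xT yT); rewrite Gxy.
Qed.

Lemma jet_scheme_coord S a : indep G S -> coord_subspace (jet_vars S) a -> J a.
Proof.
move/indepP=> indS Wa; apply/zeros_gen_idealP => _ [x [y [l [Gxy ->]]]].
rewrite meval_jet_coef //; apply: big1 => j _.
have [xS|xS] := boolP (x \in S); last by rewrite Wa ?mem_jet_vars // mul0r.
have [yS|yS] := boolP (y \in S); last by rewrite [a (jv y _)]Wa ?mem_jet_vars // mulr0.
by move: (indS x y xS yS); rewrite Gxy.
Qed.

Lemma principal_open S a : maximal_indep G S -> coord_subspace (jet_vars S) a ->
  (forall x, x \in S -> a (jv x ord0) != 0) -> J a /\ smooth_locus X (pi_s a).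
Proof.
move=> maxS Wa aS; split; first exact: jet_scheme_coord maxS.1 Wa.
apply: (smooth_locus_max_indep Gsym Girr maxS); apply/setP => x; rewrite inE /pi_s.
by have [/aS->|xS] := boolP (x \in S); last by rewrite Wa ?mem_jet_vars // eqxx.
Qed.

(* A monomial containing no edge of [PC_s(G)] has its vertices in some maximal
   independent set [S]; the points supported on the jet variables of [S] with
   non-zero order-0 coordinates lie in the principal component. *)
Lemma principal_vanishing_monomial f mo :
  vanishing (@principal_component k n s G) f -> mo \in msupp f ->
  exists u v, [/\ PC ('X_u * 'X_v), u != v, (0 < mo u)%N & (0 < mo v)%N].
Proof.
move=> /vanishing_zariski_closure fA mos; apply: NNPP => noedge.
pose V := [set x | [exists i, mo (jv x i) != 0%N]].
have indV : indep G V.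
  apply/indepP => x y; rewrite !inE => /existsP[i mxi] /existsP[j myj].
  apply/negP => Gxy; apply: noedge; exists (jv x i), (jv y j).
  split; rewrite ?lt0n //; first by exists x, y, i, j.
  by apply/negP => /eqP/jv_inj[xy _]; move: Gxy; rewrite xy Girr.
have [S maxS VS] := maximal_indep_ext Gsym Girr indV.
move: mos; rewrite mcoeff_msupp => /eqP; apply.
apply: (@mcoeff_vanishing_coord_open _ _ (jet_vars S) [set jv x ord0 | x in S]).
- by apply/subsetP => _ /imsetP[x xS ->]; rewrite mem_jet_vars.
- move=> a Wa aS; apply: fA; apply: principal_open maxS Wa _ => x xS.
  exact/aS/imset_f.
- move=> u; have [x [i ->]] := jv_surj u; rewrite mem_jet_vars => xS.
  apply/eqP; apply: contraNT xS => moxi; apply: (subsetP VS).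
  by rewrite inE; apply/existsP; exists i.
Qed.

End JetScheme.

Theorem mainTheorem8 (k : closedFieldType) (n s : nat) (G : rel 'I_n) :
  simple_graph G -> connected_graph G -> (exists x y, G x y) ->
  forall f : {mpoly k[n * s.+1]},
    vanishing (@principal_component k n s G) f <-> gen_ideal (@PC_edge_gens k n s G) f.
Proof.
move=> [Gsym Girr] _ _ f; split=> [fPC|fPC].
  by apply: gen_ideal_quadratic => mo; apply: principal_vanishing_monomial.
apply/vanishing_zariski_closure => a [Ja sa].
by apply: (proj2 (zeros_gen_idealP _ a)) fPC => g; apply: PC_edge_gens_vanish.
Qed.
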